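(* Let $S$ be a numerical semigroup with $\mathrm{l}(S)=3$. Then (1) $\{\mathrm{F}(S),\mathrm{h}(S)\}\subseteq\mathrm{PF}(S)\subseteq\{\mathrm{F}(S),\mathrm{h}(S),\tfrac{\mathrm{F}(S)}{2},\mathrm{F}(S)-\mathrm{h}(S)\}$; (2) $\tfrac{\mathrm{F}(S)}{2}\in\mathrm{PF}(S)$ if and only if $\mathrm{h}(S)-\tfrac{\mathrm{F}(S)}{2}\notin S$; (3) $\mathrm{F}(S)-\mathrm{h}(S)\in\mathrm{PF}(S)$ if and only if $2\mathrm{h}(S)-\mathrm{F}(S)\notin S$.
   Context: A numerical semigroup is a subset $S\subseteq\mathbb{N}$ closed under addition with $0\in S$ and $\mathbb{N}\setminus S$ finite; $\mathrm{F}(S)=\max(\mathbb{Z}\setminus S)$. $\mathrm{N}(S)=\{s\in S\mid s<\mathrm{F}(S)\}$, $\mathrm{L}(S)=\{x\in\mathbb{N}\setminus S\mid \mathrm{F}(S)-x\notin \mathrm{N}(S)\}$, $\mathrm{l}(S)=\#\mathrm{L}(S)$. For $\mathrm{l}(S)\ge2$, $\mathrm{h}(S)=\max\{x\in\mathbb{N}\setminus S\mid \mathrm{F}(S)-x\in\mathbb{N}\setminus S,\ x\ne \mathrm{F}(S)/2\}$. $\mathrm{PF}(S)=\{x\in\mathbb{Z}\setminus S\mid x+s\in S \text{ for all } s\in S\setminus\{0\}\}$. *)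

(* Integers/half-integers are embedded in rat. *)
From HB Require Import structures.
From mathcomp Require Import all_boot all_order all_algebra.
Set Implicit Arguments. Unset Strict Implicit. Unset Printing Implicit Defensive.
Import Order.TTheory GRing.Theory Num.Theory.
Local Open Scope ring_scope.

Definition numerical_semigroup (S : pred nat) : Prop :=
  S 0%N /\ (forall a b, S a -> S b -> S (a + b)%N) /\
  (exists N : nat, forall n, (N <= n)%N -> S n).

Definition isInt (q : rat) : Prop := exists z : int, q = z%:~R.

Definition inS (S : pred nat) (q : rat) : Prop := exists n : nat, q = n%:R /\ S n.

Definition gap (S : pred nat) (q : rat) : Prop := exists n : nat, q = n%:R /\ ~~ S n.

Definition is_frobenius (S : pred nat) (F : rat) : Prop :=
  isInt F /\ ~ inS S F /\ (forall z, isInt z -> F < z -> inS S z).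

Definition inN (S : pred nat) (F : rat) (q : rat) : Prop := inS S q /\ q < F.

Definition inL (S : pred nat) (F : rat) (x : rat) : Prop :=
  gap S x /\ ~ inN S F (F - x).

Definition has_card3 (P : rat -> Prop) : Prop :=
  exists a b c : rat, [/\ a <> b, a <> c, b <> c &
    forall x, P x <-> (x = a \/ x = b \/ x = c)].

Definition is_h (S : pred nat) (F : rat) (h : rat) : Prop :=
  [/\ gap S h, gap S (F - h), h <> F / 2%:R &
    forall x, gap S x -> gap S (F - x) -> x <> F / 2%:R -> x <= h].

Definition inPF (S : pred nat) (x : rat) : Prop :=
  isInt x /\ ~ inS S x /\ (forall s, inS S s -> s <> 0 -> inS S (x + s)).

From Stdlib Require Import Classical.
From HB Require Import structures.
From mathcomp Require Import all_boot all_order all_algebra ring lra.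
Import Order.TTheory GRing.Theory Num.Theory.
Set Implicit Arguments. Unset Strict Implicit.
Local Open Scope ring_scope.

(** The map x |-> F - x is an involution of L(S), and h and F - h are two
    distinct elements of L(S) exchanged by it.  When l(S) = 3 the remaining
    element is therefore a fixed point, so L(S) = {F/2, h, F - h}.  Every
    pseudo-Frobenius number other than F lies in L(S), and conversely an
    element y of L(S) fails to be pseudo-Frobenius exactly when y + s lies in
    L(S) for some nonzero s in S; comparing the sizes of F - h < F/2 < h
    decides each case. *)

Lemma isIntD (a b : rat) : isInt a -> isInt b -> isInt (a + b).
Proof. by move=> [x ->] [y ->]; exists (x + y); rewrite rmorphD. Qed.

Lemma isIntB (a b : rat) : isInt a -> isInt b -> isInt (a - b).
Proof. by move=> [x ->] [y ->]; exists (x - y); rewrite rmorphB. Qed.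

Section Gaps.

Variable S : pred nat.

Lemma inS_isInt a : inS S a -> isInt a.
Proof. by move=> [n [-> _]]; exists n%:Z. Qed.

Lemma gap_isInt a : gap S a -> isInt a.
Proof. by move=> [n [-> _]]; exists n%:Z. Qed.

Lemma inS_ge0 a : inS S a -> 0 <= a.
Proof. by move=> [n [-> _]]; rewrite ler0n. Qed.

Lemma inS_gt0 a : inS S a -> a <> 0 -> 0 < a.
Proof. by move=> Sa /eqP a0; rewrite lt_def a0 (inS_ge0 Sa). Qed.

Lemma gap_notin_S a : gap S a -> ~ inS S a.
Proof. by move=> [m [-> Sm]] [n [/eqP]]; rewrite eqr_nat => /eqP <-; apply/negP. Qed.

Lemma gap_gt0 a : S 0%N -> gap S a -> 0 < a.
Proof. by move=> S0 [[|n] [-> Sn]]; [rewrite S0 in Sn | rewrite ltr0Sn]. Qed.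

Lemma gapI a : isInt a -> 0 <= a -> ~ inS S a -> gap S a.
Proof.
move=> [[n|n] ->] a_ge0 Sa; first by exists n; split=> //; apply/negP => Sn; apply: Sa; exists n.
by move: a_ge0; rewrite NegzE rmorphN oppr_ge0 => /(lt_le_trans (ltr0Sn _ n)); rewrite ltxx.
Qed.

Lemma inS_add a b : numerical_semigroup S -> inS S a -> inS S b -> inS S (a + b).
Proof.
move=> [_ [S_add _]] [n [-> Sn]] [m [-> Sm]].
by exists (n + m)%N; rewrite natrD; split=> //; apply: S_add.
Qed.

Lemma inPF_sub_notin_S y g : inPF S y -> gap S g -> y < g -> ~ inS S (g - y).
Proof.
move=> [_ [_ PFy]] Gg lt_yg Sgy; apply: (gap_notin_S Gg).
rewrite -[g](subrK y) addrC; apply: PFy => // gy0.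
by move: lt_yg; rewrite -subr_gt0 gy0 ltxx.
Qed.

End Gaps.

Section Frobenius.

Variables (S : pred nat) (F : rat).
Hypotheses (NS : numerical_semigroup S) (HF : is_frobenius S F).

Let S0 : S 0%N. Proof. by case: NS. Qed.

Lemma inS_gt_frobenius z : isInt z -> F < z -> inS S z.
Proof. by case: HF => _ [_]; apply. Qed.

Lemma le_frobenius z : isInt z -> ~ inS S z -> z <= F.
Proof. by move=> Iz Sz; rewrite leNgt; apply/negP => /(inS_gt_frobenius Iz). Qed.

Lemma inL_gapP x : inL S F x <-> gap S x /\ gap S (F - x).
Proof.
have [IF _] := HF; split=> [[Gx NFx] | [Gx GFx]]; last first.
  by split=> // -[SFx _]; apply: gap_notin_S GFx SFx.
have x_gt0 := gap_gt0 S0 Gx.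
have x_le_F := le_frobenius (gap_isInt Gx) (gap_notin_S Gx).
split=> //; apply: gapI; [exact: isIntB (gap_isInt Gx) | lra |].
by move=> SFx; apply: NFx; split=> //; lra.
Qed.

Lemma inL_sym x : inL S F x -> inL S F (F - x).
Proof. by move=> /inL_gapP[Gx GFx]; apply/inL_gapP; rewrite subKr. Qed.

Lemma inPF_frobenius : inPF S F.
Proof.
have [IF [SF _]] := HF; split=> //; split=> // s Ss s0.
by apply: inS_gt_frobenius; [exact: isIntD (inS_isInt Ss) | have := inS_gt0 Ss s0; lra].
Qed.

Lemma inPF_inL x : inPF S x -> x <> F -> inL S F x.
Proof.
have [IF [SF _]] := HF; move=> [Ix [Sx PFx]] xF.
have x_lt_F : x < F by rewrite lt_neqAle le_frobenius // andbT; apply/eqP.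
have SFx : ~ inS S (F - x).
  move=> /PFx SF'; apply: SF; rewrite -(subrK x F) addrC; apply: SF'; lra.
have x_ge0 : 0 <= x.
  by rewrite leNgt; apply/negP => x_lt0; apply: SFx; apply: inS_gt_frobenius; [exact: isIntB | lra].
by apply/inL_gapP; split; apply: gapI => //; [exact: isIntB | lra].
Qed.

(* If y in L(S) and y + s is a gap then y + s < F, since F - y is a gap;
   and F - (y + s) is a gap, since F - y = (F - (y + s)) + s. *)
Lemma inL_addS y s : inL S F y -> inS S s -> s <> 0 -> ~ inS S (y + s) -> inL S F (y + s).
Proof.
move=> /inL_gapP[Gy GFy] Ss s0 Sys; have y_gt0 := gap_gt0 S0 Gy.
have Iys : isInt (y + s) by exact: isIntD (gap_isInt Gy) (inS_isInt Ss).
have ys_le_F := le_frobenius Iys Sys.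
have ys_neq_F : y + s <> F.
  by move=> ysF; apply: (gap_notin_S GFy); rewrite -ysF addrC addKr.
apply/inL_gapP; split; first by apply: gapI => //; have := inS_ge0 Ss; lra.
apply: gapI; [exact: isIntB (proj1 HF) Iys | lra |].
move=> SFys; apply: (gap_notin_S GFy).
have -> : F - y = F - (y + s) + s by ring.
exact: inS_add.
Qed.

Lemma inL_inPF y : inL S F y -> (forall s, inS S s -> 0 < s -> ~ inL S F (y + s)) -> inPF S y.
Proof.
move=> Ly noL; have [Gy _] := proj1 (inL_gapP y) Ly.
split; [exact: gap_isInt Gy | split; first exact: gap_notin_S].
move=> s Ss s0; apply: NNPP => Sys.
exact: noL s Ss (inS_gt0 Ss s0) (inL_addS Ly Ss s0 Sys).
Qed.

End Frobenius.

Lemma has_card3_third (P : rat -> Prop) p q :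
  has_card3 P -> P p -> P q -> p <> q ->
  exists r, [/\ P r, r <> p, r <> q & forall x, P x -> [\/ x = p, x = q | x = r]].
Proof.
move=> [a [b [c [ab ac bc HP]]]] /HP Hp /HP Hq; move: Hp Hq.
case=> [|[|]] -> [|[|]] -> pq //.
all: first [exists c; split; [ | congruence | congruence | ] |
            exists b; split; [ | congruence | congruence | ] |
            exists a; split; [ | congruence | congruence | ]];
  first [by apply/HP; tauto | by move=> x /HP [|[|]] ->; by [apply: Or31 | apply: Or32 | apply: Or33]].
Qed.

Section ThreeElements.

Variables (S : pred nat) (F h : rat).
Hypotheses (NS : numerical_semigroup S) (HF : is_frobenius S F).
Hypotheses (L3 : has_card3 (inL S F)) (Hh : is_h S F h).

Lemma half_lt_h : F / 2%:R < h.
Proof.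
have [Gh GFh h_neq hmax] := Hh.
have : F - h <= h by apply: hmax => //; [rewrite subKr | move=> E; apply: h_neq; lra].
by rewrite lt_def => le_Fh_h; apply/andP; split; [apply/eqP => E; apply: h_neq | lra].
Qed.

Lemma inL_h : inL S F h.
Proof. by have [Gh GFh _ _] := Hh; apply/(inL_gapP NS HF). Qed.

Lemma inL_threeP x : inL S F x <-> [\/ x = F / 2%:R, x = h | x = F - h].
Proof.
have Lh := inL_h; have LFh := inL_sym NS HF Lh; have lt_half_h := half_lt_h.
have [|r [Lr rh rFh Lr_other]] := has_card3_third L3 Lh LFh; first lra.
have r_half : r = F / 2%:R.
  by have /Lr_other [E|E|E] := inL_sym NS HF Lr; [case: rFh | case: rh | ]; lra.
split=> [/Lr_other [] -> | [] ->] //.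
- by constructor 2.
- by constructor 3.
- by rewrite r_half; constructor 1.
- by rewrite -r_half.
Qed.

End ThreeElements.

Theorem proposition16 (S : pred nat) (F h : rat) :
  numerical_semigroup S ->
  is_frobenius S F ->
  has_card3 (inL S F) ->
  is_h S F h ->
  [/\ (inPF S F /\ inPF S h /\
       (forall x, inPF S x ->
          x = F \/ x = h \/ x = F / 2%:R \/ x = F - h)),
      (inPF S (F / 2%:R) <-> ~ inS S (h - F / 2%:R)) &
      (inPF S (F - h) <-> ~ inS S (2%:R * h - F))].
Proof.
move=> NS HF L3 Hh; have [Gh GFh _ _] := Hh.
have lt_half_h := half_lt_h Hh; have LP := inL_threeP NS HF L3 Hh.
have inPF_of y : inL S F y ->
    (forall s, inS S s -> 0 < s -> ~ [\/ y + s = F / 2%:R, y + s = h | y + s = F - h]) ->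
    inPF S y.
  move=> Ly noL; apply: (inL_inPF NS HF) => // s Ss s_gt0 /LP; exact: noL.
split; [split; [exact: inPF_frobenius | split] | split | split].
- by apply: inPF_of (inL_h NS HF Hh) _ => s _ s_gt0 []; lra.
- move=> x PFx; have [->|xF] := eqVneq x F; first by left.
  by right; case/LP: (inPF_inL NS HF PFx (elimN eqP xF)) => ->; tauto.
- by move=> PF_half; apply: inPF_sub_notin_S PF_half Gh lt_half_h.
- move=> S_diff; apply: inPF_of; first by apply/LP; constructor 1.
  move=> s Ss s_gt0 [E|E|E]; [lra | | lra].
  by apply: S_diff; rewrite -E addrC addKr.
- move=> PF_Fh; rewrite (_ : 2%:R * h - F = h - (F - h)); last by ring.
  by apply: inPF_sub_notin_S PF_Fh Gh _; lra.
- move=> S_diff; apply: inPF_of; first by apply/LP; constructor 3.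
  move=> s Ss s_gt0 [E|E|E]; [apply: S_diff | apply: S_diff | lra].
  + have -> : 2%:R * h - F = s + s by lra.
    exact: inS_add.
  + by have -> : 2%:R * h - F = s by lra.
Qed.
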